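(* The full subcategory $\mathsf{Cat}_{\mathrm{compl}}(\mathbb T)$ of $\mathsf{Cat}_{\mathrm{sep}}(\mathbb T)$ consisting of the L-complete L-separated $\mathbb T$-categories is an epi-reflective subcategory of $\mathsf{Cat}_{\mathrm{sep}}(\mathbb T)$. The reflection map of an L-separated $\mathbb T$-category $X$ is given by any fully faithful L-dense embedding of $X$ into an L-complete and L-separated $\mathbb T$-category, for instance by the Yoneda functor $y:X\to\tilde X$.
   Context: Let $\mathsf V=(\mathsf V,\otimes,k)$ be a commutative unital quantale (complete lattice, commutative associative $\otimes$ with neutral $k$, $u\otimes(-)$ preserving suprema), internal hom $z\le u\multimap v\iff z\otimes u\le v$. A $\mathsf V$-relation $r$ from $X$ to $Y$ is a map $X\times Y\to\mathsf V$; composition $(s\cdot r)(x,z)=\bigvee_y r(x,y)\otimes s(y,z)$, converse $r^\circ(y,x)=r(x,y)$, pointwise order; a map $f$ is the relation $f(x,y)=k$ if $f(x)=y$, $\bot$ otherwise. Let $\mathbb T=(T,e,m)$ be a Set-monad with $T1=1$, $T$ sending pullbacks to weak pullbacks and each naturality square of $m$ a weak pullback, and $\xi:T\mathsf V\to\mathsf V$ with $\xi e_{\mathsf V}=1$, $\xi\cdot T\xi=\xi\cdot m_{\mathsf V}$, $\xi\cdot T(\otimes)=\otimes\cdot\langle\xi T\pi_1,\xi T\pi_2\rangle$, $\xi\cdot Tk=k$, and such that $\varphi\mapsto\xi\cdot T\varphi$, $\mathsf V^X\to\mathsf V^{TX}$, is natural w.r.t. the monotone maps $P_{\mathsf V}f(\varphi)(y)=\bigvee_{f(x)=y}\varphi(x)$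 (a strict topological theory). For a relation $r$ from $X$ to $Y$ let $T_\xi r(\mathfrak x,\mathfrak y)=\bigvee\{\xi(Tr(\mathfrak w))\mid\mathfrak w\in T(X\times Y),T\pi_1\mathfrak w=\mathfrak x,T\pi_2\mathfrak w=\mathfrak y\}$. A $\mathbb T$-relation from $X$ to $Y$ is a $\mathsf V$-relation from $TX$ to $Y$; Kleisli composition $b\circ a=b\cdot T_\xi a\cdot m_X^\circ$. A $\mathbb T$-category $(X,a)$ has $k\le a(e_X(x),x)$ and $a\circ a\le a$; a $\mathbb T$-functor $f:(X,a)\to(Y,b)$ satisfies $a(\mathfrak x,x)\le b(Tf(\mathfrak x),f(x))$; subsets carry the induced structure. $E=(1,k)$. A $\mathbb T$-module $\varphi:(X,a)\to(Y,b)$ is a $\mathbb T$-relation with $\varphi\circ a\le\varphi$, $b\circ\varphi\le\varphi$. For a $\mathbb T$-functor $f:Z\to(X,a)$: $f_*(\mathfrak z,x)=a(Tf(\mathfrak z),x)$, $f^*(\mathfrak x,z)=a(\mathfrak x,f(z))$. For modules $\varphi:(Z,c)\to X$, $\psi:X\to Z$, $\varphi\dashv\psi$ means $c\le\psi\circ\varphi$, $\varphi\circ\psi\le a$. $f\le g$ iff $k\le a(e_X(f(z)),g(z))$ for all $z$; $f\cong g$ iff $f\le g\le f$; $X$ is L-separated if $f\cong g$ implies $f=g$; $\mathsf{Cat}_{\mathrm{sep}}(\mathbb T)$ is the full subcategory of L-separated ones. $X$ is L-complete if each adjunction $\varphi\dashv\psi$ ($\varphi:Z\to X$) is $f_*\dashv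 f^*$ for some $\mathbb T$-functor $f:Z\to X$. $f:(A,a)\to(B,b)$ is fully faithful if $a(\mathfrak x,x)=b(Tf(\mathfrak x),f(x))$ and L-dense if $f_*\circ f^*=b$. Yoneda: $\mathsf V$ is a $\mathbb T$-category with $\hom_\xi(\mathfrak v,v)=\xi(\mathfrak v)\multimap v$; $|X|=(TX,m_X)$; $|X|\multimap\mathsf V$ is the set of $\mathbb T$-functors $|X|\to\mathsf V$ with structure $[m_X,\hom_\xi](\mathfrak p,h)=\bigwedge\{\xi(T\mathrm{ev}(\mathfrak q))\multimap h(m_X(T\pi_1\mathfrak q))\mid\mathfrak q\in T(TX\times(|X|\multimap\mathsf V)),T\pi_2\mathfrak q=\mathfrak p\}$, $\mathrm{ev}(\mathfrak x,\varphi)=\varphi(\mathfrak x)$. With $r(\mathfrak x,\mathfrak y)=\bigvee_{m_X(\mathfrak X)=\mathfrak x}T_\xi a(\mathfrak X,\mathfrak y)$, $X^{\mathrm{op}}=(TX,c)$ with $c(\mathfrak X,\mathfrak y)=T_\xi(r^\circ)(\mathfrak X,e_{TX}(\mathfrak y))$. $\hat X\subseteq|X|\multimap\mathsf V$ consists of those $\psi$ that are also $\mathbb T$-functors $X^{\mathrm{op}}\to\mathsf V$; $y:X\to\hat X$, $y(x)(\mathfrak x)=a(\mathfrak x,x)$. Each $\psi\in\hat X$ is a $\mathbb T$-module $X\to E$, tight if it has a left adjoint; $\tilde X\subseteq\hat X$ is the set of tight elements (induced structure), and $y$ lands in $\tilde X$. *)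

From Stdlib Require Import Classical ClassicalDescription.

Record quantale := Quantale {
  qc :> Type;
  qle : qc -> qc -> Prop;
  qsup : (qc -> Prop) -> qc;
  qten : qc -> qc -> qc;
  qk : qc;
  qle_refl : forall u, qle u u;
  qle_trans : forall u v w, qle u v -> qle v w -> qle u w;
  qle_anti : forall u v, qle u v -> qle v u -> u = v;
  qsup_ub : forall (S : qc -> Prop) u, S u -> qle u (qsup S);
  qsup_least : forall (S : qc -> Prop) w, (forall u, S u -> qle u w) -> qle (qsup S) w;
  qten_comm : forall u v, qten u v = qten v u;
  qten_assoc : forall u v w, qten u (qten v w) = qten (qten u v) w;
  qten_unit : forall u, qten qk u = u;
  qten_sup : forall u (S : qc -> Prop),
    qten u (qsup S) = qsup (fun w => exists v, S v /\ w = qten u v)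
}.
Arguments qle {V} u v : rename.
Arguments qsup {V} S : rename.
Arguments qten {V} u v : rename.
Arguments qk {V} : rename.

Definition qbot {V : quantale} : V := qsup (fun _ => False).
Definition qinf {V : quantale} (S : V -> Prop) : V :=
  qsup (fun w => forall u, S u -> qle w u).
Definition qhom {V : quantale} (u v : V) : V :=
  qsup (fun z => qle (qten z u) v).

Record monad := Monad {
  mT :> Type -> Type;
  fmap : forall A B, (A -> B) -> mT A -> mT B;
  ret : forall A, A -> mT A;
  join : forall A, mT (mT A) -> mT A;
  fmap_id : forall A (x : mT A), fmap A A (fun a => a) x = x;
  fmap_comp : forall A B C (f : A -> B) (g : B -> C) x,
    fmap A C (fun a => g (f a)) x = fmap B C g (fmap A B f x);
  ret_nat : forall A B (f : A -> B) a, fmap A B f (ret A a) = ret B (f a);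
  join_nat : forall A B (f : A -> B) X,
    fmap A B f (join A X) = join B (fmap (mT A) (mT B) (fmap A B f) X);
  join_ret : forall A (x : mT A), join A (ret (mT A) x) = x;
  join_fmap_ret : forall A (x : mT A), join A (fmap A (mT A) (ret A) x) = x;
  join_assoc : forall A (X : mT (mT (mT A))),
    join A (join (mT A) X) = join A (fmap (mT (mT A)) (mT A) (join A) X)
}.
Arguments fmap {m A B} f x : rename.
Arguments ret {m A} a : rename.
Arguments join {m A} X : rename.

Definition T_one (T : monad) : Prop := forall u v : T unit, u = v.

(* T sends pullbacks to weak pullbacks *)
Definition T_weak_pb (T : monad) : Prop :=
  forall (A B C : Type) (f : A -> C) (g : B -> C) (x : T A) (y : T B),
    fmap f x = fmap g y ->
    exists w : T {p : A * B | f (fst p) = g (snd p)},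
      fmap (fun p => fst (proj1_sig p)) w = x /\
      fmap (fun p => snd (proj1_sig p)) w = y.

(* each naturality square of m is a weak pullback *)
Definition join_weak_pb (T : monad) : Prop :=
  forall (A B : Type) (f : A -> B) (XX : T (T B)) (x : T A),
    join XX = fmap f x ->
    exists YY : T (T A), fmap (fmap f) YY = XX /\ join YY = x.

Definition PV {V : quantale} {X Y : Type} (f : X -> Y) (phi : X -> V) : Y -> V :=
  fun y => qsup (fun v => exists x, f x = y /\ v = phi x).

Definition strict_topth {V : quantale} {T : monad} (xi : T V -> V) : Prop :=
  (forall v : V, xi (ret v) = v) /\
  (forall XX : T (T V), xi (fmap xi XX) = xi (join XX)) /\
  (forall w : T (V * V)%type,
      xi (fmap (fun p => qten (fst p) (snd p)) w)
      = qten (xi (fmap fst w)) (xi (fmap snd w))) /\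
  (forall u : T unit, xi (fmap (fun _ : unit => (qk : V)) u) = qk) /\
  (forall (X Y : Type) (f : X -> Y) (phi : X -> V) (y : T Y),
      xi (fmap (PV f phi) y) = PV (fmap f) (fun x => xi (fmap phi x)) y).

Definition relcomp {V : quantale} {X Y Z : Type}
  (s : Y -> Z -> V) (r : X -> Y -> V) : X -> Z -> V :=
  fun x z => qsup (fun v => exists y, v = qten (r x y) (s y z)).

Definition graph {V : quantale} {X Y : Type} (f : X -> Y) : X -> Y -> V :=
  fun x y => if excluded_middle_informative (f x = y) then qk else qbot.

Definition converse {V : quantale} {X Y : Type} (r : X -> Y -> V) : Y -> X -> V :=
  fun y x => r x y.

Definition Txi {V : quantale} {T : monad} (xi : T V -> V) {X Y : Type}
  (r : X -> Y -> V) : T X -> T Y -> V :=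
  fun x y => qsup (fun v => exists w : T (X * Y)%type,
      fmap fst w = x /\ fmap snd w = y /\
      v = xi (fmap (fun p => r (fst p) (snd p)) w)).

Definition kleisli {V : quantale} {T : monad} (xi : T V -> V) {X Y Z : Type}
  (b : T Y -> Z -> V) (a : T X -> Y -> V) : T X -> Z -> V :=
  relcomp b (relcomp (Txi xi a) (converse (graph (@join T X)))).

Definition Tcat {V : quantale} {T : monad} (xi : T V -> V) {X : Type}
  (a : T X -> X -> V) : Prop :=
  (forall x, qle qk (a (ret x) x)) /\
  (forall x0 x, qle (kleisli xi a a x0 x) (a x0 x)).

Definition Tfun {V : quantale} {T : monad} {X Y : Type}
  (a : T X -> X -> V) (b : T Y -> Y -> V) (f : X -> Y) : Prop :=
  forall x0 x, qle (a x0 x) (b (fmap f x0) (f x)).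

Definition Tmod {V : quantale} {T : monad} (xi : T V -> V) {X Y : Type}
  (a : T X -> X -> V) (b : T Y -> Y -> V) (phi : T X -> Y -> V) : Prop :=
  (forall x0 y, qle (kleisli xi phi a x0 y) (phi x0 y)) /\
  (forall x0 y, qle (kleisli xi b phi x0 y) (phi x0 y)).

Definition flow {V : quantale} {T : monad} {Z X : Type}
  (a : T X -> X -> V) (f : Z -> X) : T Z -> X -> V :=
  fun z0 x => a (fmap f z0) x.
Definition fup {V : quantale} {T : monad} {Z X : Type}
  (a : T X -> X -> V) (f : Z -> X) : T X -> Z -> V :=
  fun x0 z => a x0 (f z).

Definition adjoint {V : quantale} {T : monad} (xi : T V -> V) {Z X : Type}
  (c : T Z -> Z -> V) (a : T X -> X -> V)
  (phi : T Z -> X -> V) (psi : T X -> Z -> V) : Prop :=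
  (forall z0 z, qle (c z0 z) (kleisli xi psi phi z0 z)) /\
  (forall x0 x, qle (kleisli xi phi psi x0 x) (a x0 x)).

Definition fle {V : quantale} {T : monad} {Z X : Type}
  (a : T X -> X -> V) (f g : Z -> X) : Prop :=
  forall z, qle qk (a (ret (f z)) (g z)).

Definition Lsep {V : quantale} {T : monad} (xi : T V -> V) {X : Type}
  (a : T X -> X -> V) : Prop :=
  forall (Z : Type) (c : T Z -> Z -> V), Tcat xi c ->
  forall f g : Z -> X, Tfun c a f -> Tfun c a g ->
    fle a f g -> fle a g f -> forall z, f z = g z.

Definition Lcomplete {V : quantale} {T : monad} (xi : T V -> V) {X : Type}
  (a : T X -> X -> V) : Prop :=
  forall (Z : Type) (c : T Z -> Z -> V), Tcat xi c ->
  forall (phi : T Z -> X -> V) (psi : T X -> Z -> V),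
    Tmod xi c a phi -> Tmod xi a c psi -> adjoint xi c a phi psi ->
    exists f : Z -> X, Tfun c a f /\
      (forall z0 x, phi z0 x = flow a f z0 x) /\
      (forall x0 z, psi x0 z = fup a f x0 z).

Definition ffaithful {V : quantale} {T : monad} {A B : Type}
  (a : T A -> A -> V) (b : T B -> B -> V) (f : A -> B) : Prop :=
  forall x0 x, a x0 x = b (fmap f x0) (f x).

Definition Ldense {V : quantale} {T : monad} (xi : T V -> V) {A B : Type}
  (b : T B -> B -> V) (f : A -> B) : Prop :=
  forall y0 y, kleisli xi (flow b f) (fup b f) y0 y = b y0 y.

Definition induced {V : quantale} {T : monad} {Y : Type} (P : Y -> Prop)
  (b : T Y -> Y -> V) : T {y : Y | P y} -> {y : Y | P y} -> V :=
  fun s0 s => b (fmap (@proj1_sig Y P) s0) (proj1_sig s).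

Definition homxi {V : quantale} {T : monad} (xi : T V -> V) : T V -> V -> V :=
  fun v0 v => qhom (xi v0) v.

Definition absstr {V : quantale} (T : monad) (X : Type) : T (T X) -> T X -> V :=
  graph (@join T X).

Definition LVpred {V : quantale} {T : monad} (xi : T V -> V) (X : Type)
  (h : T X -> V) : Prop := Tfun (absstr T X) (homxi xi) h.
Definition LV {V : quantale} {T : monad} (xi : T V -> V) (X : Type) : Type :=
  {h : T X -> V | LVpred xi X h}.

Definition LVstr {V : quantale} {T : monad} (xi : T V -> V) (X : Type)
  : T (LV xi X) -> LV xi X -> V :=
  fun p h => qinf (fun v => exists q : T (T X * LV xi X)%type,
      fmap snd q = p /\
      v = qhom (xi (fmap (fun u => proj1_sig (snd u) (fst u)) q))
               (proj1_sig h (join (fmap fst q)))).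

Definition opstr {V : quantale} {T : monad} (xi : T V -> V) {X : Type}
  (a : T X -> X -> V) : T (T X) -> T X -> V :=
  let r : T X -> T X -> V :=
      fun x y => qsup (fun v => exists XX : T (T X), join XX = x /\ v = Txi xi a XX y) in
  fun XX y => Txi xi (converse r) XX (ret y).

Definition hatpred {V : quantale} {T : monad} (xi : T V -> V) {X : Type}
  (a : T X -> X -> V) (h : LV xi X) : Prop :=
  Tfun (opstr xi a) (homxi xi) (proj1_sig h).
Definition hatX {V : quantale} {T : monad} (xi : T V -> V) {X : Type}
  (a : T X -> X -> V) : Type := {h : LV xi X | hatpred xi a h}.
Definition hatstr {V : quantale} {T : monad} (xi : T V -> V) {X : Type}
  (a : T X -> X -> V) : T (hatX xi a) -> hatX xi a -> V :=
  @induced V T (LV xi X) (hatpred xi a) (LVstr xi X).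

Definition Estr {V : quantale} {T : monad} : T unit -> unit -> V := fun _ _ => qk.

Definition asmod {V : quantale} {T : monad} {xi : T V -> V} {X : Type}
  {a : T X -> X -> V} (psi : hatX xi a) : T X -> unit -> V :=
  fun x0 _ => proj1_sig (proj1_sig psi) x0.

Definition tight {V : quantale} {T : monad} (xi : T V -> V) {X : Type}
  (a : T X -> X -> V) (psi : hatX xi a) : Prop :=
  exists phi : T unit -> X -> V, Tmod xi Estr a phi /\ adjoint xi Estr a phi (asmod psi).

Definition tildeX {V : quantale} {T : monad} (xi : T V -> V) {X : Type}
  (a : T X -> X -> V) : Type := {psi : hatX xi a | tight xi a psi}.
Definition tildestr {V : quantale} {T : monad} (xi : T V -> V) {X : Type}
  (a : T X -> X -> V) : T (tildeX xi a) -> tildeX xi a -> V :=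
  induced (tight xi a) (hatstr xi a).

Definition tilde_fun {V : quantale} {T : monad} {xi : T V -> V} {X : Type}
  {a : T X -> X -> V} (psi : tildeX xi a) : T X -> V :=
  proj1_sig (proj1_sig (proj1_sig psi)).

Definition reflection_arrow {V : quantale} {T : monad} (xi : T V -> V) {X Y : Type}
  (a : T X -> X -> V) (b : T Y -> Y -> V) (i : X -> Y) : Prop :=
  Tfun a b i /\
  forall (Z : Type) (c : T Z -> Z -> V), Tcat xi c -> Lcomplete xi c -> Lsep xi c ->
  forall f : X -> Z, Tfun a c f ->
    exists g : Y -> Z, Tfun b c g /\ (forall x, g (i x) = f x) /\
      (forall g' : Y -> Z, Tfun b c g' -> (forall x, g' (i x) = f x) ->
         forall y, g' y = g y).

Definition epi_sep {V : quantale} {T : monad} (xi : T V -> V) {X Y : Type}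
  (b : T Y -> Y -> V) (i : X -> Y) : Prop :=
  forall (W : Type) (d : T W -> W -> V), Tcat xi d -> Lsep xi d ->
  forall g h : Y -> W, Tfun b d g -> Tfun b d h ->
    (forall x, g (i x) = h (i x)) -> forall y, g y = h y.

(* A fully faithful L-dense T-functor [i : X -> Y] yields an adjunction [i^* -| i_*]; composed
   with [f_* -| f^*] for a T-functor [f : X -> Z] it gives an adjunction between [Y] and [Z],
   which L-completeness of [Z] represents by a T-functor [g], and L-separation of [Z] forces
   [g i = f].  Density also makes two T-functors that agree on [i] each below the other, so [i]
   is epi and [g] unique.  For the Yoneda functor [y : X -> tilde X] the Yoneda lemma
   [tilde X (T y x, psi) = psi x] gives full faithfulness, tightness of each [psi] gives
   density, and an adjunction [phi -| psi] into [tilde X] is represented by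
   [z |-> psi (T y -, z)], which is tight because its left adjoint is a composite of three
   adjunctions. *)

From Stdlib Require Import ClassicalDescription FunctionalExtensionality ProofIrrelevance.

Section Quantale.
Context {V : quantale}.
Implicit Types u v w : V.

Lemma qbot_le u : qle qbot u.
Proof. apply qsup_least. intros ? []. Qed.

Lemma qten_monoR u v v' : qle v v' -> qle (qten u v) (qten u v').
Proof.
  intro Hv.
  assert (Hsup : qsup (fun w => w = v \/ w = v') = v').
  { apply qle_anti.
    - apply qsup_least. intros w [-> | ->]; [exact Hv | apply qle_refl].
    - apply qsup_ub. now right. }
  rewrite <- Hsup, qten_sup. apply qsup_ub. exists v. auto.
Qed.

Lemma qten_monoL u u' v : qle u u' -> qle (qten u v) (qten u' v).
Proof. intro. rewrite (qten_comm _ u), (qten_comm _ u'). now apply qten_monoR. Qed.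

Lemma qten_mono u u' v v' : qle u u' -> qle v v' -> qle (qten u v) (qten u' v').
Proof. intros. eapply qle_trans; [apply qten_monoL | apply qten_monoR]; eauto. Qed.

Lemma qten_k u : qten u qk = u.
Proof. rewrite qten_comm. apply qten_unit. Qed.

Lemma qten_swap u v w : qten u (qten v w) = qten v (qten u w).
Proof. rewrite !qten_assoc, (qten_comm _ u). reflexivity. Qed.

Lemma qten_supR_le u (S : V -> Prop) w :
  (forall v, S v -> qle (qten u v) w) -> qle (qten u (qsup S)) w.
Proof. intro H. rewrite qten_sup. apply qsup_least. intros ? [v [Sv ->]]. auto. Qed.

Lemma qten_supL_le u (S : V -> Prop) w :
  (forall v, S v -> qle (qten v u) w) -> qle (qten (qsup S) u) w.
Proof. intro H. rewrite qten_comm. apply qten_supR_le. intros. rewrite qten_comm. auto. Qed.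

Lemma qten_supM_le u (S : V -> Prop) v w :
  (forall s, S s -> qle (qten u (qten s v)) w) -> qle (qten u (qten (qsup S) v)) w.
Proof. intro H. rewrite qten_swap. apply qten_supL_le. intros. rewrite qten_swap. auto. Qed.

Lemma qten_botL u : qten qbot u = qbot.
Proof. apply qle_anti; [|apply qbot_le]. apply qten_supL_le. intros ? []. Qed.

Lemma qhom_intro w u v : qle (qten w u) v -> qle w (qhom u v).
Proof. intro. now apply qsup_ub. Qed.

Lemma qhom_elim w u v : qle w (qhom u v) -> qle (qten w u) v.
Proof.
  intro H. eapply qle_trans; [apply qten_monoL, H|]. apply qten_supL_le. auto.
Qed.

Lemma qinf_lb (S : V -> Prop) u : S u -> qle (qinf S) u.
Proof. intro. apply qsup_least. auto. Qed.

Lemma qinf_glb (S : V -> Prop) w : (forall u, S u -> qle w u) -> qle w (qinf S).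
Proof. intro. now apply qsup_ub. Qed.

End Quantale.

Section Theory.
Context {V : quantale} {T : monad} (xi : T V -> V).
Hypothesis T1 : T_one T.
Hypothesis Tpb : T_weak_pb T.
Hypothesis join_pb : join_weak_pb T.
Hypothesis xi_topth : strict_topth xi.

Lemma fmap_ext {A B} (f g : A -> B) (t : T A) : (forall x, f x = g x) -> fmap f t = fmap g t.
Proof. intro H. now rewrite (functional_extensionality f g H). Qed.

Lemma fmap_fmap {A B C} (f : A -> B) (g : B -> C) (t : T A) :
  fmap g (fmap f t) = fmap (fun x => g (f x)) t.
Proof. symmetry. apply fmap_comp. Qed.

Lemma fmap_const {A B} (c : B) (t : T A) : fmap (fun _ => c) t = ret c.
Proof.
  rewrite (fmap_comp T A unit B (fun _ => tt) (fun _ => c)).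
  rewrite (T1 (fmap (fun _ => tt) t) (ret tt)). apply ret_nat.
Qed.

Lemma xi_ret v : xi (ret v) = v.
Proof. apply xi_topth. Qed.

Lemma xi_join (XX : T (T V)) : xi (fmap xi XX) = xi (join XX).
Proof. apply xi_topth. Qed.

Lemma xi_const {A} (c : V) (t : T A) : xi (fmap (fun _ => c) t) = c.
Proof. rewrite fmap_const. apply xi_ret. Qed.

Lemma xi_ten {A} (f g : A -> V) (t : T A) :
  xi (fmap (fun x => qten (f x) (g x)) t) = qten (xi (fmap f t)) (xi (fmap g t)).
Proof.
  pose proof (proj1 (proj2 (proj2 xi_topth)) (fmap (fun x => (f x, g x)) t)) as H.
  now rewrite !fmap_fmap in H.
Qed.

Lemma xi_PV {X Y} (f : X -> Y) (phi : X -> V) (y : T Y) :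
  xi (fmap (PV f phi) y) = PV (fmap f) (fun x => xi (fmap phi x)) y.
Proof. apply xi_topth. Qed.

(* [g] is the [P_V]-image along the codiagonal [A + A -> A] of the family [f + g],
   and naturality of [xi] in [P_V] then exhibits [xi (T f t)] below [xi (T g t)]. *)
Lemma xi_mono {A} (f g : A -> V) (t : T A) :
  (forall x, qle (f x) (g x)) -> qle (xi (fmap f t)) (xi (fmap g t)).
Proof.
  intro Hfg.
  set (codiag := fun s : A + A => match s with inl x | inr x => x end).
  set (fg := fun s : A + A => match s with inl x => f x | inr x => g x end).
  assert (Hg : forall x, PV codiag fg x = g x).
  { intro x. apply qle_anti.
    - apply qsup_least. intros v [[s|s] [<- ->]]; [apply Hfg | apply qle_refl].
    - apply qsup_ub. now exists (inr x). }
  rewrite <- (fmap_ext _ _ t Hg), xi_PV.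
  apply qsup_ub. exists (fmap inl t). rewrite !fmap_fmap. split; [apply fmap_id | reflexivity].
Qed.

Lemma xi_le_const {A} (f : A -> V) (t : T A) c :
  (forall x, qle (f x) c) -> qle (xi (fmap f t)) c.
Proof. intro. rewrite <- (xi_const c t). now apply xi_mono. Qed.

Lemma xi_ge_const {A} (f : A -> V) (t : T A) c :
  (forall x, qle c (f x)) -> qle c (xi (fmap f t)).
Proof. intro. rewrite <- (xi_const c t) at 1. now apply xi_mono. Qed.

(** * The lax extension [T_xi] *)

Lemma Txi_ge {X Y} (r : X -> Y -> V) (w : T (X * Y)%type) x y :
  fmap fst w = x -> fmap snd w = y ->
  qle (xi (fmap (fun p => r (fst p) (snd p)) w)) (Txi xi r x y).
Proof. intros. apply qsup_ub. eauto. Qed.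

Lemma Txi_le {X Y} (r : X -> Y -> V) x y c :
  (forall w : T (X * Y)%type, fmap fst w = x -> fmap snd w = y ->
     qle (xi (fmap (fun p => r (fst p) (snd p)) w)) c) -> qle (Txi xi r x y) c.
Proof. intro H. apply qsup_least. intros v [w [? [? ->]]]. auto. Qed.

Lemma Txi_mono {X Y} (r s : X -> Y -> V) x y :
  (forall a b, qle (r a b) (s a b)) -> qle (Txi xi r x y) (Txi xi s x y).
Proof.
  intro H. apply Txi_le. intros w Hx Hy.
  eapply qle_trans; [|apply (Txi_ge s w); auto]. now apply xi_mono.
Qed.

Lemma Txi_nat {X Y X' Y'} (r : X' -> Y' -> V) (f : X -> X') (g : Y -> Y') x y :
  qle (Txi xi (fun a b => r (f a) (g b)) x y) (Txi xi r (fmap f x) (fmap g y)).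
Proof.
  apply Txi_le. intros w <- <-.
  eapply qle_trans; [|apply (Txi_ge r (fmap (fun p => (f (fst p), g (snd p))) w))];
    rewrite !fmap_fmap; reflexivity || apply qle_refl.
Qed.

Lemma Txi_natL {X Y X'} (r : X' -> Y -> V) (f : X -> X') x y :
  qle (Txi xi (fun a b => r (f a) b) x y) (Txi xi r (fmap f x) y).
Proof. rewrite <- (fmap_id T Y y) at 2. apply (Txi_nat r f (fun b => b)). Qed.

Lemma Txi_natR {X Y Y'} (r : X -> Y' -> V) (g : Y -> Y') x y :
  qle (Txi xi (fun a b => r a (g b)) x y) (Txi xi r x (fmap g y)).
Proof. rewrite <- (fmap_id T X x) at 2. apply (Txi_nat r (fun a => a) g). Qed.

Lemma Txi_ret {X Y} (r : X -> Y -> V) x y : qle (r x y) (Txi xi r (ret x) (ret y)).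
Proof.
  eapply qle_trans; [|apply (Txi_ge r (ret (x, y))); apply ret_nat].
  rewrite ret_nat, xi_ret. apply qle_refl.
Qed.

Lemma Txi_diag {X} (r : X -> X -> V) (x : T X) c :
  (forall a, qle c (r a a)) -> qle c (Txi xi r x x).
Proof.
  intro H. eapply qle_trans; [|apply (Txi_ge r (fmap (fun a => (a, a)) x))];
    rewrite ?fmap_fmap; [apply xi_ge_const, H | apply fmap_id | apply fmap_id].
Qed.

(* A lift of [(x, ret y)] factors through the pullback of [snd] along [y : 1 -> Y]. *)
Lemma Txi_retR {X Y} (r : X -> Y -> V) (x : T X) (y : Y) :
  Txi xi r x (ret y) = xi (fmap (fun a => r a y) x).
Proof.
  apply qle_anti.
  - apply Txi_le. intros w <- Hy.
    destruct (Tpb _ _ _ snd (fun _ : unit => y) w (ret tt)) as [W [<- _]].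
    { now rewrite Hy, ret_nat. }
    rewrite !fmap_fmap. apply xi_mono. intros [[[a b] u] e]. simpl in *. subst. apply qle_refl.
  - eapply qle_trans; [|apply (Txi_ge r (fmap (fun a => (a, y)) x))];
      rewrite ?fmap_fmap; [apply qle_refl | apply fmap_id | simpl; apply fmap_const].
Qed.

(** * Kleisli composition, modules and adjunctions *)

Definition rel_le {A B} (r s : A -> B -> V) : Prop := forall x y, qle (r x y) (s x y).

Lemma rel_le_refl {A B} (r : A -> B -> V) : rel_le r r.
Proof. intros ? ?. apply qle_refl. Qed.

Lemma rel_le_trans {A B} (r s t : A -> B -> V) : rel_le r s -> rel_le s t -> rel_le r t.
Proof. intros H1 H2 x y. eapply qle_trans; eauto. Qed.

Lemma rel_le_anti {A B} (r s : A -> B -> V) : rel_le r s -> rel_le s r -> r = s.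
Proof.
  intros H1 H2. apply functional_extensionality. intro x.
  apply functional_extensionality. intro y. now apply qle_anti.
Qed.

Lemma kleisli_ge {X Y Z} (b : T Y -> Z -> V) (a : T X -> Y -> V) XX y z :
  qle (qten (Txi xi a XX y) (b y z)) (kleisli xi b a (join XX) z).
Proof.
  eapply qle_trans; [|apply qsup_ub; exists y; reflexivity].
  apply qten_monoL. eapply qle_trans; [|apply qsup_ub; exists XX; reflexivity].
  unfold converse, graph. destruct excluded_middle_informative as [_|]; [|contradiction].
  rewrite qten_unit. apply qle_refl.
Qed.

Lemma kleisli_le {X Y Z} (b : T Y -> Z -> V) (a : T X -> Y -> V) x0 z c :
  (forall XX y, join XX = x0 -> qle (qten (Txi xi a XX y) (b y z)) c) ->
  qle (kleisli xi b a x0 z) c.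
Proof.
  intro H. apply qsup_least. intros v [y ->]. apply qten_supL_le. intros v [XX ->].
  unfold converse, graph. destruct excluded_middle_informative.
  - rewrite qten_unit. auto.
  - rewrite !qten_botL. apply qbot_le.
Qed.

Lemma kleisli_tenL_le {X Y Z} (b : T Y -> Z -> V) (a : T X -> Y -> V) x0 z u c :
  (forall XX y, join XX = x0 -> qle (qten u (qten (Txi xi a XX y) (b y z))) c) ->
  qle (qten u (kleisli xi b a x0 z)) c.
Proof.
  intro H. apply qten_supR_le. intros v [y ->]. apply qten_supM_le. intros v [XX ->].
  unfold converse, graph. destruct excluded_middle_informative.
  - rewrite qten_unit. auto.
  - rewrite !qten_botL, qten_comm, qten_botL. apply qbot_le.
Qed.

Lemma kleisli_mono {X Y Z} (b b' : T Y -> Z -> V) (a a' : T X -> Y -> V) :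
  rel_le a a' -> rel_le b b' -> rel_le (kleisli xi b a) (kleisli xi b' a').
Proof.
  intros Ha Hb x0 z. apply kleisli_le. intros XX y <-.
  eapply qle_trans; [|apply kleisli_ge]. apply qten_mono; auto. now apply Txi_mono.
Qed.

Lemma kleisli_ret_ge {X Y Z} (b : T Y -> Z -> V) (a : T X -> Y -> V) x0 y z :
  qle (qten (a x0 y) (b (ret y) z)) (kleisli xi b a x0 z).
Proof.
  rewrite <- (join_ret T X x0) at 2.
  eapply qle_trans; [|apply kleisli_ge]. apply qten_monoL, Txi_ret.
Qed.

Lemma kleisli_assoc_le {X Y Z W} (a : T X -> Y -> V) (b : T Y -> Z -> V) (c : T Z -> W -> V) :
  rel_le (kleisli xi (kleisli xi c b) a) (kleisli xi c (kleisli xi b a)).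
Proof.
  intros x0 w. apply kleisli_le. intros XX y Hx.
  apply kleisli_tenL_le. intros YY z <-.
  unfold Txi at 1. apply qten_supL_le. intros v [w1 [W1 [W2 ->]]].
  apply qten_supM_le. intros v [u [U1 [U2 ->]]].
  rewrite qten_assoc.
  destruct (join_pb _ _ snd YY w1) as [WW [WW1 WW2]]; [congruence|].
  destruct (Tpb _ _ _ (fmap snd) fst WW u) as [Q [Q1 Q2]]; [congruence|].
  set (g := fun p : {p : (T (T X * Y)%type * (T Y * Z))%type | fmap snd (fst p) = fst (snd p)} =>
              (join (fmap fst (fst (proj1_sig p))), snd (snd (proj1_sig p)))).
  assert (Hz : fmap snd (fmap g Q) = z).
  { subst z u. rewrite !fmap_fmap. reflexivity. }
  assert (HX : join (fmap fst (fmap g Q)) = x0).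
  { subst x0 XX. rewrite fmap_fmap. unfold g. simpl.
    rewrite <- (fmap_fmap (fun p => fmap fst (fst (proj1_sig p))) join), <- join_assoc,
      <- (fmap_fmap (fun p => fst (proj1_sig p)) (fmap fst)), Q1, <- join_nat, WW2.
    reflexivity. }
  rewrite <- HX. eapply qle_trans; [|apply kleisli_ge]. apply qten_monoL.
  eapply qle_trans; [|apply (Txi_ge _ (fmap g Q)); auto]. rewrite fmap_fmap.
  apply qle_trans with (xi (fmap (fun p =>
    qten (xi (fmap (fun t => a (fst t) (snd t)) (fst (proj1_sig p))))
         (b (fst (snd (proj1_sig p))) (snd (snd (proj1_sig p))))) Q)).
  - rewrite xi_ten. apply qten_mono.
    + rewrite <- (fmap_fmap (fun p => fst (proj1_sig p)) (fun W => xi (fmap _ W))), Q1,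
        <- (fmap_fmap (fmap (fun t => a (fst t) (snd t))) xi), xi_join, <- join_nat, WW2.
      apply qle_refl.
    + rewrite <- (fmap_fmap (fun p => snd (proj1_sig p)) (fun q => b (fst q) (snd q))), Q2.
      apply qle_refl.
  - apply xi_mono. intros [[W0 [y' z']] e]. simpl in *. rewrite <- e.
    eapply qle_trans; [|apply kleisli_ge]. apply qten_monoL. now apply Txi_ge.
Qed.

Lemma kleisli_assoc_ge {X Y Z W} (a : T X -> Y -> V) (b : T Y -> Z -> V) (c : T Z -> W -> V) :
  rel_le (kleisli xi c (kleisli xi b a)) (kleisli xi (kleisli xi c b) a).
Proof.
  intros x0 w. apply kleisli_le. intros XX z Hx.
  apply qten_supL_le. intros v [q [C1 [C2 ->]]].
  set (f := fun e : (T (T X * Y)%type * Z)%type => (join (fmap fst (fst e)), snd e)).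
  set (ph := fun e : (T (T X * Y)%type * Z)%type =>
    qten (xi (fmap (fun t => a (fst t) (snd t)) (fst e))) (b (fmap snd (fst e)) (snd e))).
  apply qle_trans with (qten (xi (fmap (PV f ph) q)) (c z w)).
  { apply qten_monoL, xi_mono. intros [x z'].
    apply kleisli_le. intros X1 y1 E1. apply qten_supL_le. intros v [w1 [D1 [D2 ->]]].
    apply qsup_ub. exists (w1, z'). unfold f, ph. simpl. now rewrite D1, D2, E1. }
  rewrite xi_PV. apply qten_supL_le. intros v [al [F ->]].
  set (WW := join (fmap fst al)).
  assert (HX : join (fmap fst WW) = x0).
  { subst x0 XX q WW. now rewrite join_nat, join_assoc, !fmap_fmap. }
  rewrite <- HX. eapply qle_trans; [|apply (kleisli_ge _ _ _ (fmap snd WW))].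
  unfold ph. rewrite xi_ten, <- qten_assoc. apply qten_mono.
  - eapply qle_trans; [|apply Txi_ge; reflexivity].
    unfold WW. rewrite join_nat, <- xi_join, !fmap_fmap. apply qle_refl.
  - assert (Hy : join (fmap (fun e => fmap snd (fst e)) al) = fmap snd WW).
    { unfold WW. rewrite join_nat, fmap_fmap. reflexivity. }
    rewrite <- Hy. eapply qle_trans; [|eapply (kleisli_ge _ _ _ _ z)]. apply qten_monoL.
    eapply qle_trans; [|apply (Txi_ge _ (fmap (fun e => (fmap snd (fst e), snd e)) al))];
      rewrite !fmap_fmap; [apply qle_refl | reflexivity |].
    rewrite <- C2, <- F, fmap_fmap. reflexivity.
Qed.

Lemma kleisli_assoc {X Y Z W} (a : T X -> Y -> V) (b : T Y -> Z -> V) (c : T Z -> W -> V) :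
  kleisli xi (kleisli xi c b) a = kleisli xi c (kleisli xi b a).
Proof. apply rel_le_anti; [apply kleisli_assoc_le | apply kleisli_assoc_ge]. Qed.

Definition Trefl {X} (a : T X -> X -> V) : Prop := forall x, qle qk (a (ret x) x).

Lemma Tcat_refl {X} (a : T X -> X -> V) : Tcat xi a -> Trefl a.
Proof. now intros [? _]. Qed.

Lemma Tcat_trans {X} (a : T X -> X -> V) XX y z : Tcat xi a ->
  qle (qten (Txi xi a XX y) (a y z)) (a (join XX) z).
Proof. intros [_ Ha]. eapply qle_trans; [apply kleisli_ge | apply Ha]. Qed.

Lemma Estr_refl : Trefl (@Estr V T).
Proof. intro. apply qle_refl. Qed.

Lemma Txi_refl {X} (a : T X -> X -> V) (x0 : T X) : Trefl a ->
  qle qk (Txi xi a (fmap ret x0) x0).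
Proof.
  intro Ha. rewrite <- (fmap_id T X x0) at 2.
  eapply qle_trans; [|apply Txi_nat]. now apply Txi_diag.
Qed.

Lemma kleisli_unitL {X Y} (b : T Y -> Y -> V) (phi : T X -> Y -> V) :
  Trefl b -> rel_le phi (kleisli xi b phi).
Proof.
  intros Hb x0 y. eapply qle_trans; [|apply kleisli_ret_ge].
  rewrite <- (qten_k (phi x0 y)) at 1. apply qten_monoR, Hb.
Qed.

Lemma kleisli_unitR {X Y} (a : T X -> X -> V) (phi : T X -> Y -> V) :
  Trefl a -> rel_le phi (kleisli xi phi a).
Proof.
  intros Ha x0 y. rewrite <- (join_fmap_ret T X x0) at 2.
  eapply qle_trans; [|apply (kleisli_ge _ _ _ x0)].
  rewrite <- (qten_unit _ (phi x0 y)) at 1. apply qten_monoL. now apply Txi_refl.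
Qed.

Lemma Tmod_kleisliL {X Y} a b (phi : T X -> Y -> V) :
  Tmod xi a b phi -> rel_le (kleisli xi phi a) phi.
Proof. now intros [? _]. Qed.

Lemma Tmod_kleisliR {X Y} a b (phi : T X -> Y -> V) :
  Tmod xi a b phi -> rel_le (kleisli xi b phi) phi.
Proof. now intros [_ ?]. Qed.

Lemma Tmod_comp {X Y Z} (a : T X -> X -> V) (b : T Y -> Y -> V) (c : T Z -> Z -> V)
  (phi : T X -> Y -> V) (psi : T Y -> Z -> V) :
  Tmod xi a b phi -> Tmod xi b c psi -> Tmod xi a c (kleisli xi psi phi).
Proof.
  intros Hphi Hpsi. split.
  - rewrite kleisli_assoc. apply kleisli_mono; [apply (Tmod_kleisliL _ _ _ Hphi) | apply rel_le_refl].
  - rewrite <- kleisli_assoc. apply kleisli_mono; [apply rel_le_refl | apply (Tmod_kleisliR _ _ _ Hpsi)].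
Qed.

Lemma Tcat_Tmod {X} (a : T X -> X -> V) : Tcat xi a -> Tmod xi a a a.
Proof. intros [_ Ha]. split; exact Ha. Qed.

Lemma Tmod_kleisli_unitL {X Y} (a : T X -> X -> V) (b : T Y -> Y -> V) (phi : T X -> Y -> V) :
  Trefl a -> Tmod xi a b phi -> kleisli xi phi a = phi.
Proof.
  intros Ha Hphi. apply rel_le_anti; [apply (Tmod_kleisliL _ _ _ Hphi) | now apply kleisli_unitR].
Qed.

Lemma Tmod_kleisli_unitR {X Y} (a : T X -> X -> V) (b : T Y -> Y -> V) (phi : T X -> Y -> V) :
  Trefl b -> Tmod xi a b phi -> kleisli xi b phi = phi.
Proof.
  intros Hb Hphi. apply rel_le_anti; [apply (Tmod_kleisliR _ _ _ Hphi) | now apply kleisli_unitL].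
Qed.

Lemma Tmod_flow {X Y} (a : T X -> X -> V) (b : T Y -> Y -> V) (f : X -> Y) :
  Tcat xi b -> Tfun a b f -> Tmod xi a b (flow b f).
Proof.
  intros Hb Hf. split; intros x0 y; apply kleisli_le; intros XX y' <-;
    unfold flow; rewrite join_nat; (eapply qle_trans; [|apply Tcat_trans, Hb]);
    apply qten_monoL.
  - eapply qle_trans; [|apply Txi_nat]. apply Txi_mono, Hf.
  - apply Txi_natL.
Qed.

Lemma Tmod_fup {X Y} (a : T X -> X -> V) (b : T Y -> Y -> V) (f : X -> Y) :
  Tcat xi b -> Tfun a b f -> Tmod xi b a (fup b f).
Proof.
  intros Hb Hf. split; intros y0 x; apply kleisli_le; intros YY x' <-; unfold fup.
  - now apply Tcat_trans.
  - eapply qle_trans; [|apply (Tcat_trans _ _ (fmap f x')), Hb].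
    apply qten_mono; [apply Txi_natR | apply Hf].
Qed.

Lemma adjoint_flow_fup {X Y} (a : T X -> X -> V) (b : T Y -> Y -> V) (f : X -> Y) :
  Tcat xi b -> Tfun a b f -> adjoint xi a b (flow b f) (fup b f).
Proof.
  intros Hb Hf. split.
  - intros x0 x. rewrite <- (join_fmap_ret T X x0) at 2.
    eapply qle_trans; [|apply (kleisli_ge _ _ _ (fmap f x0))].
    rewrite <- (qten_unit _ (a x0 x)). apply qten_mono; [|apply Hf].
    eapply qle_trans; [|apply (Txi_nat (flow b f) ret f)]. apply Txi_diag. intro x'.
    unfold flow. rewrite ret_nat. apply (Tcat_refl _ Hb).
  - intros y0 y. apply kleisli_le. intros YY x' <-. unfold flow.
    eapply qle_trans; [|apply Tcat_trans, Hb]. apply qten_monoL, (Txi_natR b f).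
Qed.

Lemma adjoint_comp {X Y Z} (a : T X -> X -> V) (b : T Y -> Y -> V) (c : T Z -> Z -> V)
  (phi1 : T X -> Y -> V) (psi1 : T Y -> X -> V) (phi2 : T Y -> Z -> V) (psi2 : T Z -> Y -> V) :
  Trefl b -> Tmod xi c b psi2 ->
  adjoint xi a b phi1 psi1 -> adjoint xi b c phi2 psi2 ->
  adjoint xi a c (kleisli xi phi2 phi1) (kleisli xi psi1 psi2).
Proof.
  intros Hb Hpsi2 [unit1 counit1] [unit2 counit2]. split.
  - rewrite kleisli_assoc, <- (kleisli_assoc phi1 phi2 psi2).
    eapply rel_le_trans; [exact unit1|]. apply kleisli_mono; [|apply rel_le_refl].
    eapply rel_le_trans; [apply (kleisli_unitL b), Hb|].
    apply kleisli_mono; [apply rel_le_refl | exact unit2].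
  - rewrite kleisli_assoc, <- (kleisli_assoc psi2 psi1 phi1).
    eapply rel_le_trans; [|exact counit2]. apply kleisli_mono; [|apply rel_le_refl].
    eapply rel_le_trans; [|apply (Tmod_kleisliR _ _ _ Hpsi2)].
    apply kleisli_mono; [apply rel_le_refl | exact counit1].
Qed.

Lemma left_adjoint_unique {X Y} (a : T X -> X -> V) (b : T Y -> Y -> V)
  (phi phi' : T X -> Y -> V) (psi : T Y -> X -> V) :
  Trefl a -> Tmod xi a b phi' -> adjoint xi a b phi psi -> adjoint xi a b phi' psi ->
  rel_le phi phi'.
Proof.
  intros Ha Hphi' [_ counit] [unit' _].
  eapply rel_le_trans; [apply (kleisli_unitR a), Ha|].
  eapply rel_le_trans; [apply kleisli_mono; [exact unit' | apply rel_le_refl]|].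
  rewrite <- kleisli_assoc.
  eapply rel_le_trans; [|apply (Tmod_kleisliR _ _ _ Hphi')].
  apply kleisli_mono; [apply rel_le_refl | exact counit].
Qed.

Lemma kleisli_flow {X Y Z} (b : T Y -> Y -> V) (c : T Z -> Z -> V) (f : X -> Y)
  (psi : T Y -> Z -> V) :
  Tcat xi b -> Tmod xi b c psi ->
  forall x0 z, kleisli xi psi (flow b f) x0 z = psi (fmap f x0) z.
Proof.
  intros Hb Hpsi x0 z. apply qle_anti.
  - apply kleisli_le. intros XX y <-. eapply qle_trans; [|apply (Tmod_kleisliL _ _ _ Hpsi)].
    rewrite join_nat. eapply qle_trans; [|apply kleisli_ge]. apply qten_monoL, (Txi_natL b (fmap f)).
  - rewrite <- (join_fmap_ret T X x0) at 2.
    eapply qle_trans; [|apply (kleisli_ge _ _ _ (fmap f x0))].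
    rewrite <- (qten_unit _ (psi _ _)) at 1. apply qten_monoL.
    eapply qle_trans; [|apply (Txi_nat (flow b f) ret f)]. apply Txi_diag. intro x.
    unfold flow. rewrite ret_nat. apply (Tcat_refl _ Hb).
Qed.

Lemma Tfun_const {Z} (c : T Z -> Z -> V) (z : Z) : Tcat xi c -> Tfun Estr c (fun _ : unit => z).
Proof. intros Hc u t. unfold Estr. rewrite fmap_const. apply (Tcat_refl _ Hc). Qed.

(** * Fully faithful L-dense embeddings *)

Section DenseEmbedding.
Variables (X Y : Type) (a : T X -> X -> V) (b : T Y -> Y -> V) (i : X -> Y).
Hypotheses (Ha : Tcat xi a) (Hb : Tcat xi b) (Hi : Tfun a b i).
Hypotheses (i_ff : ffaithful a b i) (i_dense : Ldense xi b i).

Lemma adjoint_fup_flow : adjoint xi b a (fup b i) (flow b i).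
Proof.
  split.
  - intros y0 y. rewrite i_dense. apply qle_refl.
  - intros x0 x. eapply qle_trans; [apply (Tmod_kleisliR _ _ _ (Tmod_flow a b i Hb Hi))|].
    unfold flow. rewrite i_ff. apply qle_refl.
Qed.

(* Density lets [qk <= b (ret y) y] factor through [i], where [g] and [h] agree. *)
Lemma Ldense_fle {W} (d : T W -> W -> V) (g h : Y -> W) :
  Tcat xi d -> Tfun b d g -> Tfun b d h -> (forall x, g (i x) = h (i x)) -> fle d g h.
Proof.
  intros Hd Hg Hh Egh y. eapply qle_trans; [apply (Tcat_refl _ Hb y)|].
  rewrite <- i_dense. apply kleisli_le. intros YY x1 HY.
  replace (ret (g y)) with (fmap g (join YY)) by (rewrite HY; apply ret_nat).
  rewrite join_nat. eapply qle_trans; [|apply (Tcat_trans _ _ (fmap (fun x => g (i x)) x1)), Hd].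
  apply qten_mono.
  - eapply qle_trans; [|apply Txi_nat]. apply Txi_mono. intros Y0 x. apply Hg.
  - unfold flow. eapply qle_trans; [apply Hh|]. rewrite fmap_fmap.
    rewrite (fmap_ext _ (fun x => g (i x))); [apply qle_refl | intro; symmetry; apply Egh].
Qed.

Lemma Ldense_epi_sep : epi_sep xi b i.
Proof.
  intros W d Hd d_sep g h Hg Hh Egh.
  apply (d_sep Y b Hb g h Hg Hh); apply Ldense_fle; auto.
Qed.

Lemma Ldense_extension {Z} (c : T Z -> Z -> V) (f : X -> Z) :
  Tcat xi c -> Lcomplete xi c -> Lsep xi c -> Tfun a c f ->
  exists g : Y -> Z, Tfun b c g /\ forall x, g (i x) = f x.
Proof.
  intros Hc c_compl c_sep Hf.
  pose proof (adjoint_comp b a c _ _ _ _ (Tcat_refl _ Ha) (Tmod_fup a c f Hc Hf)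
    adjoint_fup_flow (adjoint_flow_fup a c f Hc Hf)) as adj.
  destruct (c_compl Y b Hb _ _
              (Tmod_comp _ _ _ _ _ (Tmod_fup a b i Hb Hi) (Tmod_flow a c f Hc Hf))
              (Tmod_comp _ _ _ _ _ (Tmod_fup a c f Hc Hf) (Tmod_flow a b i Hb Hi)) adj)
    as [g [Hg [Hphi Hpsi]]].
  exists g. split; [exact Hg|].
  apply (c_sep X a Ha (fun x => g (i x)) f); [| exact Hf | |].
  - intros x0 x. eapply qle_trans; [apply Hi|]. eapply qle_trans; [apply Hg|].
    rewrite fmap_fmap. apply qle_refl.
  - intro x. specialize (Hphi (ret (i x)) (f x)). unfold flow in Hphi. rewrite ret_nat in Hphi.
    rewrite <- Hphi. eapply qle_trans; [|apply (kleisli_ret_ge _ _ _ x)].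
    rewrite <- (qten_unit _ qk). apply qten_mono; [apply (Tcat_refl _ Hb)|].
    unfold flow. rewrite ret_nat. apply (Tcat_refl _ Hc).
  - intro x. specialize (Hpsi (ret (f x)) (i x)). unfold fup in Hpsi.
    rewrite <- Hpsi. eapply qle_trans; [|apply (kleisli_ret_ge _ _ _ x)].
    rewrite <- (qten_unit _ qk). apply qten_mono; [apply (Tcat_refl _ Hc)|].
    unfold flow. rewrite ret_nat. apply (Tcat_refl _ Hb).
Qed.

Lemma Ldense_reflection : reflection_arrow xi a b i.
Proof.
  split; [exact Hi|].
  intros Z c Hc c_compl c_sep f Hf.
  destruct (Ldense_extension c f Hc c_compl c_sep Hf) as [g [Hg Hgi]].
  exists g. repeat split; [exact Hg | exact Hgi |].
  intros g' Hg' Hg'i. apply (Ldense_epi_sep Z c Hc c_sep g' g Hg' Hg).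
  intro x. now rewrite Hg'i, Hgi.
Qed.

End DenseEmbedding.

(** * The presheaf category [|X| -o V] *)

Section PresheafCategory.
Variable X : Type.

Definition ev (u : (T X * LV xi X)%type) : V := proj1_sig (snd u) (fst u).

Lemma LVstr_intro (p : T (LV xi X)) (h : LV xi X) w :
  (forall q : T (T X * LV xi X)%type, fmap snd q = p ->
     qle (qten w (xi (fmap ev q))) (proj1_sig h (join (fmap fst q)))) ->
  qle w (LVstr xi X p h).
Proof. intro H. apply qinf_glb. intros v [q [Hq ->]]. now apply qhom_intro, H. Qed.

Lemma LVstr_elim (q : T (T X * LV xi X)%type) (h : LV xi X) :
  qle (qten (LVstr xi X (fmap snd q) h) (xi (fmap ev q))) (proj1_sig h (join (fmap fst q))).
Proof. apply qhom_elim, qinf_lb. now exists q. Qed.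

Lemma LVpred_join (h : LV xi X) XX : qle (xi (fmap (proj1_sig h) XX)) (proj1_sig h (join XX)).
Proof.
  destruct h as [h Hh]. simpl. specialize (Hh XX (join XX)).
  unfold absstr, graph, homxi in Hh. destruct excluded_middle_informative; [|congruence].
  apply qhom_elim in Hh. now rewrite qten_unit in Hh.
Qed.

(* The weak pullback of [snd] and [G] re-indexes [q] over [Z]. *)
Lemma ev_fiber {Z} (q : T (T X * LV xi X)%type) (G : Z -> LV xi X) (z0 : T Z) :
  fmap snd q = fmap G z0 ->
  exists Q : T {p : ((T X * LV xi X) * Z)%type | snd (fst p) = G (snd p)},
    fmap (fun p => fst (proj1_sig p)) Q = q /\ fmap (fun p => snd (proj1_sig p)) Q = z0 /\
    xi (fmap ev q) =
      xi (fmap (fun p => proj1_sig (G (snd (proj1_sig p))) (fst (fst (proj1_sig p)))) Q).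
Proof.
  intro E. destruct (Tpb _ _ _ snd G q z0 E) as [Q [<- <-]].
  exists Q. repeat split. rewrite fmap_fmap. f_equal. apply fmap_ext.
  intros [[[x h] z] e]. unfold ev. simpl in *. now rewrite e.
Qed.

Lemma LVstr_ge {Z} (G : Z -> LV xi X) (m : T X -> Z -> V) (z0 : T Z) (h : LV xi X) w :
  (forall x0 z, proj1_sig (G z) x0 = m x0 z) ->
  (forall P, qle (qten (Txi xi m P z0) w) (proj1_sig h (join P))) ->
  qle w (LVstr xi X (fmap G z0) h).
Proof.
  intros HG Hh. apply LVstr_intro. intros q E.
  destruct (ev_fiber q G z0 E) as [Q [Q1 [Q2 ->]]].
  rewrite qten_comm. eapply qle_trans; [|apply Hh]. apply qten_monoL.
  eapply qle_trans;
    [|apply (Txi_ge m (fmap (fun p => (fst (fst (proj1_sig p)), snd (proj1_sig p))) Q))];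
    rewrite <- ?Q1, <- ?Q2, !fmap_fmap; [|reflexivity | reflexivity].
  apply xi_mono. intro p. rewrite HG. apply qle_refl.
Qed.

Lemma ev_ret (q : T (T X * LV xi X)%type) (h : LV xi X) :
  fmap snd q = ret h -> xi (fmap ev q) = xi (fmap (proj1_sig h) (fmap fst q)).
Proof.
  intro E. destruct (ev_fiber q (fun _ : unit => h) (ret tt)) as [Q [<- [_ ->]]].
  - now rewrite ret_nat.
  - now rewrite !fmap_fmap.
Qed.

Lemma LVstr_refl (h : LV xi X) : qle qk (LVstr xi X (ret h) h).
Proof.
  apply LVstr_intro. intros q E. rewrite qten_unit, (ev_ret q h E). apply LVpred_join.
Qed.

Lemma LV_Tcat : Tcat xi (LVstr xi X).
Proof.
  split; [intro; apply LVstr_refl|].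
  intros p0 h. apply kleisli_le. intros P qq E.
  apply LVstr_intro. intros q Eq.
  rewrite <- qten_assoc. unfold Txi at 1. apply qten_supL_le. intros v [w [W1 [W2 ->]]].
  rewrite qten_assoc.
  destruct (join_pb _ _ snd P q) as [QQ [QQ1 QQ2]]; [congruence|].
  destruct (Tpb _ _ _ (fmap snd) fst QQ w) as [R [R1 R2]]; [congruence|].
  set (q' := fmap (fun p : {p : (T (T X * LV xi X)%type * (T (LV xi X) * LV xi X))%type
                        | fmap snd (fst p) = fst (snd p)} =>
                     (join (fmap fst (fst (proj1_sig p))), snd (snd (proj1_sig p)))) R).
  assert (Hs : fmap snd q' = qq).
  { unfold q'. rewrite fmap_fmap, <- W2, <- R2, fmap_fmap. reflexivity. }
  assert (Hf : join (fmap fst q') = join (fmap fst q)).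
  { unfold q'. rewrite fmap_fmap. simpl.
    rewrite <- (fmap_fmap (fun p => fmap fst (fst (proj1_sig p))) join), <- join_assoc,
      <- (fmap_fmap (fun p => fst (proj1_sig p)) (fmap fst)), R1, <- join_nat, QQ2.
    reflexivity. }
  rewrite <- Hf. eapply qle_trans; [|rewrite <- Hs; apply LVstr_elim].
  rewrite Hs, <- qten_assoc, qten_swap. apply qten_monoR.
  subst w q. unfold q'. rewrite !fmap_fmap, join_nat, <- xi_join, <- R1, !fmap_fmap, <- xi_ten.
  apply xi_mono. intros [[Q0 [p1 g]] e]. simpl in *. subst p1. apply LVstr_elim.
Qed.

Lemma LVpred_of_Tmod {Z} (a : T X -> X -> V) (c : T Z -> Z -> V) (m : T X -> Z -> V) z :
  Tcat xi c -> Tmod xi a c m -> LVpred xi X (fun x0 => m x0 z).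
Proof.
  intros Hc Hm XX x0. unfold absstr, graph, homxi.
  destruct excluded_middle_informative as [<-|]; [|apply qbot_le].
  apply qhom_intro. rewrite qten_unit.
  eapply qle_trans; [|apply (Tmod_kleisliR _ _ _ Hm)].
  eapply qle_trans; [|apply (kleisli_ge _ _ _ (ret z))].
  rewrite <- (qten_k (xi _)), Txi_retR. apply qten_monoR, (Tcat_refl _ Hc).
Qed.

End PresheafCategory.

(** * The Yoneda embedding [X -> tilde X] *)

Lemma induced_Tcat {Y} (P : Y -> Prop) (b : T Y -> Y -> V) :
  Tcat xi b -> Tcat xi (induced P b).
Proof.
  intros Hb. split.
  - intro s. unfold induced. rewrite ret_nat. apply (Tcat_refl _ Hb).
  - intros x0 z. apply kleisli_le. intros XX y <-. unfold induced.
    rewrite join_nat. eapply qle_trans; [|apply Tcat_trans, Hb]. apply qten_monoL, Txi_nat.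
Qed.

Section Tilde.
Variables (X : Type) (a : T X -> X -> V).

Definition tproj (p : tildeX xi a) : LV xi X := proj1_sig (proj1_sig p).

Lemma tildestr_LVstr p0 p : tildestr xi a p0 p = LVstr xi X (fmap tproj p0) (tproj p).
Proof. unfold tildestr, hatstr, induced. now rewrite fmap_fmap. Qed.

Lemma tilde_Tcat : Tcat xi (tildestr xi a).
Proof. apply induced_Tcat, induced_Tcat, LV_Tcat. Qed.

Lemma tilde_fun_inj (p1 p2 : tildeX xi a) :
  (forall x0, tilde_fun p1 x0 = tilde_fun p2 x0) -> p1 = p2.
Proof.
  intro H. apply functional_extensionality in H.
  destruct p1 as [[[h1 l1] k1] t1], p2 as [[[h2 l2] k2] t2]. unfold tilde_fun in H. simpl in H.
  subst h2. rewrite (proof_irrelevance _ l1 l2), (proof_irrelevance _ k1 k2),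
    (proof_irrelevance _ t1 t2). reflexivity.
Qed.

Lemma tilde_fun_le (p1 p2 : tildeX xi a) x0 :
  qle qk (tildestr xi a (ret p1) p2) -> qle (tilde_fun p1 x0) (tilde_fun p2 x0).
Proof.
  intro H. rewrite tildestr_LVstr, ret_nat in H.
  pose proof (LVstr_elim X (ret (x0, tproj p1)) (tproj p2)) as L.
  rewrite !ret_nat, join_ret, xi_ret in L.
  eapply qle_trans; [|exact L]. rewrite <- (qten_unit _ (tilde_fun p1 x0)) at 1.
  now apply qten_monoL.
Qed.

Lemma tilde_Lsep : Lsep xi (tildestr xi a).
Proof.
  intros Z c _ f g _ _ Hfg Hgf z. apply tilde_fun_inj. intro x0.
  apply qle_anti; now apply tilde_fun_le.
Qed.

(* The condition [h o a <= h] for [h] viewed as a T-relation [X -> E]. *)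
Definition Tpresheaf (h : T X -> V) : Prop :=
  forall P x0, qle (qten (Txi xi a P x0) (h x0)) (h (join P)).

Lemma opstr_eq XX y0 : opstr xi a XX y0 =
  xi (fmap (fun x0 => qsup (fun v => exists P, join P = y0 /\ v = Txi xi a P x0)) XX).
Proof. unfold opstr. now rewrite Txi_retR. Qed.

Lemma hatpred_of_Tpresheaf (h : LV xi X) : Tpresheaf (proj1_sig h) -> hatpred xi a h.
Proof.
  intros Hh XX y0. apply qhom_intro. rewrite opstr_eq, <- xi_ten. apply xi_le_const.
  intro x0. apply qten_supL_le. intros v [P [<- ->]]. apply Hh.
Qed.

Lemma Tpresheaf_of_hatpred (h : LV xi X) : hatpred xi a h -> Tpresheaf (proj1_sig h).
Proof.
  intros Hh P x0. specialize (Hh (ret x0) (join P)).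
  apply qhom_elim in Hh. rewrite ret_nat, xi_ret in Hh.
  eapply qle_trans; [|exact Hh]. apply qten_monoL.
  rewrite opstr_eq, ret_nat, xi_ret. apply qsup_ub. eauto.
Qed.

Lemma Tpresheaf_of_Tmod {Z} (c : T Z -> Z -> V) (m : T X -> Z -> V) z :
  Tmod xi a c m -> Tpresheaf (fun x0 => m x0 z).
Proof.
  intros Hm P x0. eapply qle_trans; [|apply (Tmod_kleisliL _ _ _ Hm)]. apply kleisli_ge.
Qed.

Definition hat_of_Tmod {Z} (c : T Z -> Z -> V) (m : T X -> Z -> V)
  (Hc : Tcat xi c) (Hm : Tmod xi a c m) (z : Z) : hatX xi a :=
  let h := exist (LVpred xi X) (fun x0 => m x0 z) (LVpred_of_Tmod X a c m z Hc Hm) in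
  exist (hatpred xi a) h (hatpred_of_Tpresheaf h (Tpresheaf_of_Tmod c m z Hm)).

Lemma Tfun_into_tilde {Z} (c : T Z -> Z -> V) (m : T X -> Z -> V) (f : Z -> tildeX xi a) :
  Tmod xi a c m -> (forall z x0, tilde_fun (f z) x0 = m x0 z) -> Tfun c (tildestr xi a) f.
Proof.
  intros Hm Hf z0 z. rewrite tildestr_LVstr, fmap_fmap.
  apply (LVstr_ge X (fun z => tproj (f z)) m); [intros; apply Hf|].
  intro P. change (proj1_sig (tproj (f z)) (join P)) with (tilde_fun (f z) (join P)).
  rewrite Hf. eapply qle_trans; [|apply (Tmod_kleisliR _ _ _ Hm)]. apply kleisli_ge.
Qed.


Hypothesis Ha : Tcat xi a.

Lemma yoneda_tight x : tight xi a (hat_of_Tmod a a Ha (Tcat_Tmod a Ha) x).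
Proof.
  exists (flow a (fun _ : unit => x)). split.
  - apply Tmod_flow; [exact Ha | apply Tfun_const, Ha].
  - apply adjoint_flow_fup; [exact Ha | apply Tfun_const, Ha].
Qed.

Definition yoneda (x : X) : tildeX xi a := exist _ _ (yoneda_tight x).

Lemma yoneda_lemma (psi : tildeX xi a) x0 :
  tildestr xi a (fmap yoneda x0) psi = tilde_fun psi x0.
Proof.
  rewrite tildestr_LVstr, fmap_fmap. apply qle_anti.
  - pose proof (LVstr_elim X (fmap (fun x => (ret x, tproj (yoneda x))) x0) (tproj psi)) as L.
    rewrite !fmap_fmap in L. simpl in L. rewrite join_fmap_ret in L.
    eapply qle_trans; [|exact L]. rewrite <- (qten_k (LVstr _ _ _ _)) at 1.
    apply qten_monoR, xi_ge_const. intro x. apply (Tcat_refl _ Ha).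
  - apply (LVstr_ge X (fun x => tproj (yoneda x)) a); [reflexivity|].
    intro P. apply Tpresheaf_of_hatpred, (proj2_sig (proj1_sig psi)).
Qed.

Lemma yoneda_ff : ffaithful a (tildestr xi a) yoneda.
Proof. intros x0 x. now rewrite yoneda_lemma. Qed.

Lemma yoneda_Tfun : Tfun a (tildestr xi a) yoneda.
Proof. intros x0 x. rewrite yoneda_ff. apply qle_refl. Qed.

Lemma tight_left_le (psi : tildeX xi a) (phi : T unit -> X -> V) :
  adjoint xi Estr a phi (asmod (proj1_sig psi)) ->
  forall u x, qle (phi u x) (tildestr xi a (ret psi) (yoneda x)).
Proof.
  intros [_ counit] u x. rewrite (T1 u (ret tt)), tildestr_LVstr, ret_nat.
  apply LVstr_intro. intros q E. rewrite (ev_ret X q _ E), qten_comm.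
  eapply qle_trans; [|apply (counit (join (fmap fst q)) x)].
  eapply qle_trans; [|apply (kleisli_ge _ _ (fmap fst q) (ret tt))].
  rewrite Txi_retR. apply qle_refl.
Qed.

(* The left adjoint witnessing tightness of [psi] factors [tildestr (-) psi] through [yoneda]. *)
Lemma tildestr_le_kleisli (psi : tildeX xi a) p0 :
  qle (tildestr xi a p0 psi)
      (kleisli xi (asmod (proj1_sig psi)) (fup (tildestr xi a) yoneda) p0 tt).
Proof.
  destruct (proj2_sig psi) as [phi [_ Hadj]].
  set (pt := fup (tildestr xi a) (fun _ : unit => psi)).
  change (tildestr xi a p0 psi) with (pt p0 tt).
  eapply qle_trans; [apply (kleisli_unitL Estr pt Estr_refl)|].
  eapply qle_trans; [apply (kleisli_mono _ _ pt pt (rel_le_refl pt) (proj1 Hadj))|].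
  rewrite kleisli_assoc. apply kleisli_mono; [|apply rel_le_refl].
  intros p1 x. apply kleisli_le. intros P u <-. rewrite (T1 u (ret tt)).
  eapply qle_trans; [|apply (Tcat_trans _ P (ret psi) (yoneda x) tilde_Tcat)].
  apply qten_mono.
  - unfold pt, fup. rewrite !Txi_retR. apply qle_refl.
  - now apply tight_left_le.
Qed.

Lemma kleisli_asmod_le (psi : tildeX xi a) p0 :
  qle (kleisli xi (asmod (proj1_sig psi)) (fup (tildestr xi a) yoneda) p0 tt)
      (kleisli xi (flow (tildestr xi a) yoneda) (fup (tildestr xi a) yoneda) p0 psi).
Proof.
  apply kleisli_le. intros P x0 <-. eapply qle_trans; [|apply kleisli_ge].
  apply qten_monoR. unfold flow. rewrite yoneda_lemma. apply qle_refl.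
Qed.

Lemma yoneda_Ldense : Ldense xi (tildestr xi a) yoneda.
Proof.
  intros p0 psi. apply qle_anti.
  - apply (adjoint_flow_fup a _ yoneda tilde_Tcat yoneda_Tfun).
  - eapply qle_trans; [apply tildestr_le_kleisli | apply kleisli_asmod_le].
Qed.

Lemma tildestr_kleisli_asmod (psi : tildeX xi a) p0 :
  tildestr xi a p0 psi =
  kleisli xi (asmod (proj1_sig psi)) (fup (tildestr xi a) yoneda) p0 tt.
Proof.
  apply qle_anti; [apply tildestr_le_kleisli|].
  eapply qle_trans; [apply kleisli_asmod_le|]. rewrite yoneda_Ldense. apply qle_refl.
Qed.


Section Completeness.
Variables (Z : Type) (c : T Z -> Z -> V).
Variables (phi : T Z -> tildeX xi a -> V) (psi : T (tildeX xi a) -> Z -> V).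
Hypotheses (Hc : Tcat xi c) (Hphi : Tmod xi c (tildestr xi a) phi).
Hypotheses (Hpsi : Tmod xi (tildestr xi a) c psi) (Hadj : adjoint xi c (tildestr xi a) phi psi).

Definition restr_psi : T X -> Z -> V := kleisli xi psi (flow (tildestr xi a) yoneda).

Lemma restr_psi_eq x0 z : restr_psi x0 z = psi (fmap yoneda x0) z.
Proof. exact (kleisli_flow _ c yoneda psi tilde_Tcat Hpsi x0 z). Qed.

Lemma Tmod_restr_psi : Tmod xi a c restr_psi.
Proof. exact (Tmod_comp _ _ _ _ _ (Tmod_flow _ _ _ tilde_Tcat yoneda_Tfun) Hpsi). Qed.

(* The left adjoint of [restr_psi (-) z] is [y^* o phi o z_*], a composite of three adjunctions. *)
Lemma restr_psi_tight z : tight xi a (hat_of_Tmod c restr_psi Hc Tmod_restr_psi z).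
Proof.
  set (zc := fun _ : unit => z).
  pose proof (Tfun_const c z Hc) as Hz.
  pose proof (adjoint_comp Estr c (tildestr xi a) _ _ _ _ (Tcat_refl _ Hc) Hpsi
                (adjoint_flow_fup Estr c zc Hc Hz) Hadj) as adj1.
  pose proof (adjoint_comp Estr (tildestr xi a) a _ _ _ _ (Tcat_refl _ tilde_Tcat)
                (Tmod_flow _ _ _ tilde_Tcat yoneda_Tfun) adj1
                (adjoint_fup_flow _ _ _ _ _ tilde_Tcat yoneda_Tfun yoneda_ff yoneda_Ldense)) as adj2.
  exists (kleisli xi (fup (tildestr xi a) yoneda) (kleisli xi phi (flow c zc))). split.
  - apply (Tmod_comp _ (tildestr xi a)); [|apply Tmod_fup; [apply tilde_Tcat | apply yoneda_Tfun]].
    apply (Tmod_comp _ c); [apply Tmod_flow; [exact Hc | exact Hz] | exact Hphi].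
  - replace (asmod (hat_of_Tmod c restr_psi Hc Tmod_restr_psi z))
      with (kleisli xi (kleisli xi (fup c zc) psi) (flow (tildestr xi a) yoneda)); [exact adj2|].
    apply functional_extensionality. intro x0. apply functional_extensionality. intros [].
    rewrite (kleisli_flow _ Estr); [|apply tilde_Tcat|].
    + change (kleisli xi c psi (fmap yoneda x0) z = restr_psi x0 z).
      now rewrite restr_psi_eq, (Tmod_kleisli_unitR _ _ _ (Tcat_refl _ Hc) Hpsi).
    + apply (Tmod_comp _ c); [exact Hpsi | apply Tmod_fup; [exact Hc | exact Hz]].
Qed.

Definition tilde_ext (z : Z) : tildeX xi a := exist _ _ (restr_psi_tight z).

Lemma tilde_ext_Tfun : Tfun c (tildestr xi a) tilde_ext.
Proof. exact (Tfun_into_tilde c restr_psi tilde_ext Tmod_restr_psi (fun z x0 => eq_refl)). Qed.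

Lemma tilde_ext_fup : psi = fup (tildestr xi a) tilde_ext.
Proof.
  apply functional_extensionality. intro p0. apply functional_extensionality. intro z.
  unfold fup. rewrite tildestr_kleisli_asmod.
  change (psi p0 z = kleisli xi restr_psi (fup (tildestr xi a) yoneda) p0 z).
  assert (Hd : kleisli xi (flow (tildestr xi a) yoneda) (fup (tildestr xi a) yoneda)
               = tildestr xi a).
  { apply functional_extensionality. intro. apply functional_extensionality. intro.
    apply yoneda_Ldense. }
  unfold restr_psi. rewrite kleisli_assoc, Hd.
  now rewrite (Tmod_kleisli_unitL _ _ _ (Tcat_refl _ tilde_Tcat) Hpsi).
Qed.

Lemma tilde_ext_flow : phi = flow (tildestr xi a) tilde_ext.
Proof.
  pose proof (adjoint_flow_fup _ _ _ tilde_Tcat tilde_ext_Tfun) as adj.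
  pose proof Hadj as adj'. rewrite tilde_ext_fup in adj'.
  apply rel_le_anti; eapply left_adjoint_unique; eauto using Tcat_refl.
  apply Tmod_flow; [apply tilde_Tcat | apply tilde_ext_Tfun].
Qed.

End Completeness.

Lemma tilde_Lcomplete : Lcomplete xi (tildestr xi a).
Proof.
  intros Z c Hc phi psi Hphi Hpsi Hadj.
  exists (tilde_ext Z c phi psi Hc Hphi Hpsi Hadj). split; [apply tilde_ext_Tfun|].
  split; intros u v.
  - exact (f_equal (fun r => r u v) (tilde_ext_flow Z c phi psi Hc Hphi Hpsi Hadj)).
  - exact (f_equal (fun r => r u v) (tilde_ext_fup Z c phi psi Hc Hphi Hpsi Hadj)).
Qed.

End Tilde.
End Theory.

Theorem mainTheorem18 (V : quantale) (T : monad) (xi : T V -> V)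
  (HT1 : T_one T) (Hpb : T_weak_pb T) (Hm : join_weak_pb T)
  (Hxi : strict_topth xi) :
  forall (X : Type) (a : T X -> X -> V), Tcat xi a -> Lsep xi a ->
    (* any fully faithful L-dense embedding into an L-complete L-separated
       T-category is an epi reflection *)
    (forall (Y : Type) (b : T Y -> Y -> V) (i : X -> Y),
        Tcat xi b -> Lcomplete xi b -> Lsep xi b ->
        Tfun a b i -> ffaithful a b i -> Ldense xi b i ->
        reflection_arrow xi a b i /\ epi_sep xi b i) /\
    (* in particular, the Yoneda functor y : X -> tilde X *)
    (Tcat xi (tildestr xi a) /\ Lcomplete xi (tildestr xi a) /\
     Lsep xi (tildestr xi a) /\
     exists y : X -> tildeX xi a,
       (forall x x0, tilde_fun (y x) x0 = a x0 x) /\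
       Tfun a (tildestr xi a) y /\ ffaithful a (tildestr xi a) y /\
       Ldense xi (tildestr xi a) y /\
       reflection_arrow xi a (tildestr xi a) y /\ epi_sep xi (tildestr xi a) y).
Proof.
  (* Neither the reflection nor the Yoneda construction needs [X] to be L-separated. *)
  intros X a Ha _.
  assert (Hrefl : forall (Y : Type) (b : T Y -> Y -> V) (i : X -> Y),
             Tcat xi b -> Tfun a b i -> ffaithful a b i -> Ldense xi b i ->
             reflection_arrow xi a b i /\ epi_sep xi b i).
  { intros Y b i Hb Hi Hff Hd.
    split; [eapply Ldense_reflection | eapply Ldense_epi_sep]; eauto. }
  set (y := yoneda xi HT1 Hpb Hxi X a Ha).
  assert (HB : Tcat xi (tildestr xi a)) by (eapply tilde_Tcat; eauto).
  assert (Hy : Tfun a (tildestr xi a) y) by (eapply yoneda_Tfun; eauto).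
  assert (Hyff : ffaithful a (tildestr xi a) y) by (eapply yoneda_ff; eauto).
  assert (Hyd : Ldense xi (tildestr xi a) y) by (eapply yoneda_Ldense; eauto).
  split; [intros Y b i Hb _ _; now apply Hrefl|].
  split; [exact HB|]. split; [eapply tilde_Lcomplete; eauto|]. split; [eapply tilde_Lsep; eauto|].
  exists y. split; [reflexivity|]. split; [exact Hy|]. split; [exact Hyff|].
  split; [exact Hyd|]. now apply Hrefl.
Qed.
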